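(* Let $n \ge 1$, let $C \in \mathbb{R}^{n\times n}$ be a real cost matrix, let $\eta > 0$, and set $K = \exp[-\eta C]$, i.e. $K_{ij} = e^{-\eta C_{ij}}$. Then: (i) the entropic Minimum Mean Cycle problem $$\min_{P \in \Delta_{n\times n} \,:\, P\mathbf{1} = P^T\mathbf{1}} \ \langle P, C\rangle + \frac{1}{\eta}\sum_{i,j} P_{ij}\log P_{ij}$$ has a unique minimizer $P^\star$; (ii) there exists a positive diagonal matrix $X$ such that $B = XKX^{-1}$ satisfies $B\mathbf{1} = B^T\mathbf{1}$, and for any such $X$ we have $P^\star = B / (\mathbf{1}^T B \mathbf{1})$.
   Context: $\Delta_{n\times n} = \{P \in \mathbb{R}^{n\times n}_{\ge 0} : \sum_{ij} P_{ij} = 1\}$; $\mathbf{1}$ is the all-ones vector; $\langle P, C\rangle = \sum_{ij} P_{ij}C_{ij}$; $0\log 0 = 0$. The Matrix Balancing problem for a positive matrix $K$ asks for a positive diagonal $X$ such that $P = XKX^{-1}$ has equal row and column sums, $P\mathbf{1} = P^T\mathbf{1}$. *)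

From mathcomp Require Import all_boot all_order all_algebra.
From mathcomp Require Import all_classical all_reals all_analysis.
Set Implicit Arguments. Unset Strict Implicit. Unset Printing Implicit Defensive.
Import Order.TTheory GRing.Theory Num.Theory.
Local Open Scope ring_scope.

Section Defs.
Variable R : realType.

Definition in_simplex n (P : 'M[R]_n) : Prop :=
  (forall i j, 0 <= P i j) /\ \sum_i \sum_j P i j = 1.

Definition balanced n (P : 'M[R]_n) : Prop :=
  P *m (const_mx 1 : 'cV[R]_n) = P^T *m (const_mx 1 : 'cV[R]_n).

Definition xlogx (x : R) : R := if x == 0 then 0 else x * ln x.

Definition entropic_obj n (eta : R) (C P : 'M[R]_n) : R :=
  \sum_i \sum_j P i j * C i j + eta^-1 * \sum_i \sum_j xlogx (P i j).

Definition gibbs_kernel n (eta : R) (C : 'M[R]_n) : 'M[R]_n :=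
  \matrix_(i, j) expR (- eta * C i j).

Definition pos_diag n (X : 'M[R]_n) : Prop :=
  is_diag_mx X /\ forall i, 0 < X i i.

Definition total_sum n (B : 'M[R]_n) : R := \sum_i \sum_j B i j.
End Defs.

From mathcomp Require Import all_boot all_order all_algebra.
From mathcomp Require Import all_classical all_reals all_analysis.
From mathcomp Require Import ring lra.
Import Order.TTheory GRing.Theory Num.Theory.
Import numFieldNormedType.Exports.
Set Implicit Arguments.
Unset Strict Implicit.
Local Open Scope ring_scope.

(* Variational half: if d > 0 and B = diag(d) K diag(d)^-1 is balanced and
   P = B / (1^T B 1), then log P_ij = -log Z + log d_i - eta C_ij - log d_j, so
   on balanced Q in the simplex the d-terms cancel and the objective equals
   -(1/eta) log Z + (1/eta) KL(Q || P), with KL the generalized Kullback-Leibler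
   divergence (nonnegative, zero only at Q = P).  Hence P is the unique
   minimizer for every balancing d: this gives (i) and the last claim of (ii).

   Existence half: the potential f(x) = sum_ij K_ij exp(x_i - x_j) is shift
   invariant and large when some x_i - x_j is large, so it has a global
   minimizer (found on a compact box).  Multiplying exp(x_k) by s changes f by
   (s - 1) r_k + (1/s - 1) c_k (off-diagonal row and column sums); minimality
   for all s > 0 forces r_k = c_k, so d = exp(x) balances K. *)

Section Divergence.
Context {R : realType}.

(* One summand of the generalized Kullback-Leibler divergence,
   q log (q / p) - q + p (with 0 log 0 = 0). *)
Definition kl_term (q p : R) : R := xlogx q - q * ln p - q + p.

(* Strict positivity off the diagonal: the tangent line 1 + y < exp y at
   y = log p - log q, multiplied by q. *)
Lemma kl_term_gt0 (q p : R) : 0 <= q -> 0 < p -> q != p -> 0 < kl_term q p.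
Proof.
move=> q_ge0 p_gt0 qNp; rewrite /kl_term /xlogx.
have [->|qN0] := eqVneq q 0; first by rewrite !mul0r !subr0 add0r.
have q_gt0 : 0 < q by rewrite lt_def qN0 q_ge0.
have lnNeq : ln p - ln q != 0.
  rewrite subr_eq0; apply: contra qNp => /eqP lnE.
  by rewrite (ln_inj _ _ lnE) ?posrE.
have := expR_gt1Dx lnNeq; rewrite expRB !lnK ?posrE // => tangent.
have : q * (1 + (ln p - ln q)) < q * (p / q) by rewrite ltr_pM2l.
rewrite mulrCA mulfV ?gt_eqF // mulr1; lra.
Qed.

Lemma kl_term_id (p : R) : 0 < p -> kl_term p p = 0.
Proof. by move=> p_gt0; rewrite /kl_term /xlogx gt_eqF // subrr add0r addrC subrr. Qed.

Lemma kl_term_ge0 (q p : R) : 0 <= q -> 0 < p -> 0 <= kl_term q p.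
Proof.
move=> q_ge0 p_gt0; have [->|qNp] := eqVneq q p; first by rewrite kl_term_id.
exact/ltW/kl_term_gt0.
Qed.

Definition kl_div n (Q P : 'M[R]_n) : R :=
  \sum_i \sum_j kl_term (Q i j) (P i j).

Lemma kl_div_ge0 n (Q P : 'M[R]_n) :
  (forall i j, 0 <= Q i j) -> (forall i j, 0 < P i j) -> 0 <= kl_div Q P.
Proof.
by move=> Q_ge0 P_gt0; do 2![apply: sumr_ge0 => ? _]; exact: kl_term_ge0.
Qed.

Lemma kl_div_id n (P : 'M[R]_n) : (forall i j, 0 < P i j) -> kl_div P P = 0.
Proof. by move=> P_gt0; rewrite /kl_div; do 2![rewrite big1 // => ? _]; exact: kl_term_id. Qed.

Lemma kl_div_le0 n (Q P : 'M[R]_n) :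
  (forall i j, 0 <= Q i j) -> (forall i j, 0 < P i j) -> kl_div Q P <= 0 ->
  Q = P.
Proof.
move=> Q_ge0 P_gt0; rewrite /kl_div pair_bigA /= => kl_le0.
have terms_ge0 (ij : 'I_n * 'I_n) :
    true -> 0 <= kl_term (Q ij.1 ij.2) (P ij.1 ij.2) by move=> _; exact: kl_term_ge0.
have /(psumr_eq0P terms_ge0) terms0 : \sum_ij kl_term (Q ij.1 ij.2) (P ij.1 ij.2) = 0.
  by apply/eqP; rewrite eq_le kl_le0 sumr_ge0.
apply/matrixP => i j; apply/eqP; apply: contraT => QNP.
by have := kl_term_gt0 (Q_ge0 i j) (P_gt0 i j) QNP; rewrite (terms0 (i, j)) ?ltxx.
Qed.

End Divergence.

Lemma entry_le_sum2 (R : numDomainType) (I : finType) (F : I -> I -> R) i j :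
  (forall i j, 0 <= F i j) -> F i j <= \sum_i \sum_j F i j.
Proof.
move=> F_ge0.
have rest_row : 0 <= \sum_(l | l != j) F i l by apply: sumr_ge0 => l _.
have rest : 0 <= \sum_(k | k != i) \sum_l F k l by do 2![apply: sumr_ge0 => ? _].
by rewrite (bigD1 i) //= (bigD1 j) //= -addrA lerDl addr_ge0.
Qed.

Section Scaling.
Context {R : realType}.

Lemma balancedP n (M : 'M[R]_n) :
  balanced M <-> forall i, \sum_j M i j = \sum_j M j i.
Proof.
have sumsE i : (M *m const_mx 1 : 'cV_n) i ord0 = \sum_j M i j /\
               (M^T *m const_mx 1 : 'cV_n) i ord0 = \sum_j M j i.
  by rewrite !mxE; split; apply: eq_bigr => j _; rewrite !mxE mulr1.
rewrite /balanced; split=> [bal i | sums].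
  by have [<- <-] := sumsE i; rewrite bal.
by apply/matrixP => i k; rewrite ord1; have [-> ->] := sumsE i; exact: sums.
Qed.

Lemma balancedZ n (a : R) (M : 'M[R]_n) : balanced M -> balanced (a *: M).
Proof. by rewrite /balanced linearZ /= -!scalemxAl => ->. Qed.

Definition dscale n (d : 'I_n -> R) (K : 'M[R]_n) : 'M[R]_n :=
  \matrix_(i, j) (d i * K i j / d j).

Lemma diag_conjE n (d : 'I_n -> R) (K : 'M[R]_n) : (forall i, d i != 0) ->
  diag_mx (\row_i d i) *m K *m invmx (diag_mx (\row_i d i)) = dscale d K.
Proof.
move=> dN0; set D := diag_mx _.
have DDinv : D *m diag_mx (\row_i (d i)^-1) = 1%:M.
  rewrite mulmx_diag -diag_const_mx; congr diag_mx.
  by apply/matrixP => i j; rewrite !mxE mulfV.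
have invDE : invmx D = diag_mx (\row_i (d i)^-1).
  have [Dunit _] := mulmx1_unit DDinv.
  by rewrite -[LHS]mulmx1 -DDinv mulmxA mulVmx // mul1mx.
rewrite invDE mul_mx_diag mul_diag_mx.
by apply/matrixP => i j; rewrite !mxE.
Qed.

Lemma pos_diagE n (X : 'M[R]_n) : pos_diag X -> X = diag_mx (\row_i X i i).
Proof.
move=> [/is_diag_mxP Xdiag _]; apply/matrixP => i j; rewrite !mxE.
by have [->|ij] := eqVneq i j; rewrite ?mulr1n // mulr0n Xdiag.
Qed.

Lemma pos_diag_conjE n (X K : 'M[R]_n) :
  pos_diag X -> X *m K *m invmx X = dscale (fun i => X i i) K.
Proof.
move=> Xpos; have [_ X_gt0] := Xpos.
by rewrite {1 2}(pos_diagE Xpos) diag_conjE // => i; rewrite gt_eqF.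
Qed.

Lemma dscale_gt0 n (d : 'I_n -> R) (K : 'M[R]_n) :
  (forall i, 0 < d i) -> (forall i j, 0 < K i j) -> forall i j, 0 < dscale d K i j.
Proof. by move=> d_gt0 K_gt0 i j; rewrite mxE divr_gt0 ?mulr_gt0. Qed.

Definition normalize n (B : 'M[R]_n) : 'M[R]_n := (total_sum B)^-1 *: B.

Lemma normalize_gt0 n (B : 'M[R]_n) : (0 < n)%N -> (forall i j, 0 < B i j) ->
  0 < total_sum B /\ forall i j, 0 < normalize B i j.
Proof.
move=> n_gt0 B_gt0; pose i0 := Ordinal n_gt0.
have Z_gt0 : 0 < total_sum B.
  by apply: lt_le_trans (B_gt0 i0 i0) (entry_le_sum2 _ _ _) => i j; exact: ltW.
by split=> // i j; rewrite mxE mulr_gt0 ?invr_gt0.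
Qed.

Lemma normalize_simplex n (B : 'M[R]_n) : 0 < total_sum B ->
  (forall i j, 0 <= B i j) -> in_simplex (normalize B).
Proof.
move=> Z_gt0 B_ge0; split=> [i j|]; first by rewrite mxE mulr_ge0 // invr_ge0 ltW.
under eq_bigr do under eq_bigr do rewrite mxE.
under eq_bigr do rewrite -mulr_sumr.
by rewrite -mulr_sumr mulVf ?gt_eqF.
Qed.

End Scaling.

Section GibbsVariational.
Context {R : realType}.
Variables (n : nat) (C : 'M[R]_n) (eta : R).
Hypothesis eta_gt0 : 0 < eta.

Lemma gibbs_kernel_gt0 i j : 0 < gibbs_kernel eta C i j.
Proof. by rewrite mxE expR_gt0. Qed.

Definition entropic_min (P : 'M[R]_n) : Prop :=
  [/\ in_simplex P, balanced P &
      forall Q, in_simplex Q -> balanced Q ->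
        entropic_obj eta C P <= entropic_obj eta C Q].

Variable d : 'I_n -> R.
Hypothesis d_gt0 : forall i, 0 < d i.

Lemma ln_normalized_gibbs i j :
  0 < total_sum (dscale d (gibbs_kernel eta C)) ->
  ln (normalize (dscale d (gibbs_kernel eta C)) i j) =
  - ln (total_sum (dscale d (gibbs_kernel eta C))) + ln (d i)
    - eta * C i j - ln (d j).
Proof.
move=> Z_gt0; rewrite !mxE lnM ?posrE ?invr_gt0 ?divr_gt0 ?mulr_gt0 ?expR_gt0 //.
rewrite lnV ?posrE // ln_div ?posrE ?mulr_gt0 ?expR_gt0 //.
by rewrite lnM ?posrE ?expR_gt0 // expRK; ring.
Qed.

Lemma entropic_obj_gibbs (Q : 'M[R]_n) :
  0 < total_sum (dscale d (gibbs_kernel eta C)) ->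
  in_simplex Q -> balanced Q ->
  entropic_obj eta C Q =
    - eta^-1 * ln (total_sum (dscale d (gibbs_kernel eta C))) +
    eta^-1 * kl_div Q (normalize (dscale d (gibbs_kernel eta C))).
Proof.
move=> Z_gt0 [_ Q_mass] /balancedP Q_bal.
set Z := total_sum _; set P := normalize _.
have P_mass : \sum_i \sum_j P i j = 1.
  apply: (normalize_simplex Z_gt0 _).2 => i j.
  exact/ltW/(dscale_gt0 d_gt0 gibbs_kernel_gt0).
have log_weights_cancel :
    \sum_i \sum_j Q i j * ln (d i) = \sum_i \sum_j Q i j * ln (d j).
  rewrite [RHS]exchange_big /=; apply: eq_bigr => i _.
  by rewrite -!mulr_suml Q_bal.
have klE : kl_div Q P = \sum_i \sum_j (xlogx (Q i j) + eta * (Q i j * C i j)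
    + ln Z * Q i j - Q i j * ln (d i) + Q i j * ln (d j) - Q i j + P i j).
  by apply: eq_bigr => i _; apply: eq_bigr => j _; rewrite /kl_term ln_normalized_gibbs //; ring.
rewrite klE /entropic_obj.
move: log_weights_cancel P_mass Q_mass; rewrite !pair_bigA /= => weights P_mass Q_mass.
rewrite !big_split /= !sumrN -!mulr_sumr weights P_mass Q_mass.
by field; rewrite gt_eqF.
Qed.

Hypothesis d_balances : balanced (dscale d (gibbs_kernel eta C)).

Lemma gibbs_unique_min : (0 < n)%N ->
  entropic_min (normalize (dscale d (gibbs_kernel eta C))) /\
  forall Q, entropic_min Q -> Q = normalize (dscale d (gibbs_kernel eta C)).
Proof.
move=> n_gt0; set P := normalize _.
have B_gt0 := dscale_gt0 d_gt0 gibbs_kernel_gt0.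
have [Z_gt0 P_gt0] := normalize_gt0 n_gt0 B_gt0.
have P_simplex : in_simplex P by apply: normalize_simplex => // i j; exact: ltW.
have P_bal : balanced P by exact: balancedZ.
have objP : entropic_obj eta C P =
    - eta^-1 * ln (total_sum (dscale d (gibbs_kernel eta C))).
  by rewrite entropic_obj_gibbs // kl_div_id // mulr0 addr0.
have eta_inv_gt0 : 0 < eta^-1 by rewrite invr_gt0.
split=> [|Q [[Q_ge0 Q_mass] Q_bal Q_min]].
  split=> // Q Q_simplex Q_bal; rewrite objP entropic_obj_gibbs // lerDl.
  by apply: mulr_ge0; [exact: ltW | apply: kl_div_ge0 => //; case: Q_simplex].
apply: kl_div_le0 => //.
have := Q_min P P_simplex P_bal.
rewrite objP entropic_obj_gibbs // -[leRHS]addr0 lerD2l.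
by rewrite pmulr_rle0.
Qed.

End GibbsVariational.

(* AM-GM rigidity: if A + B <= s A + B / s for every s > 0 then A = B; at
   s = (A + B) / (2 A) the inequality becomes (A - B)^2 <= 0. *)
Lemma scaled_sum_min_eq (R : realFieldType) (A B : R) : 0 <= A -> 0 <= B ->
  (forall s, 0 < s -> A + B <= s * A + s^-1 * B) -> A = B.
Proof.
move=> A_ge0 B_ge0 ineq.
have [A0|AN0] := eqVneq A 0.
  have := ineq 2 (ltr0Sn _ 1); rewrite A0 mulr0 !add0r => B_le.
  by apply/eqP; rewrite eq_le B_ge0 /=; lra.
have A_gt0 : 0 < A by rewrite lt_def AN0.
have S_gt0 : 0 < A + B by lra.
have := ineq ((A + B) / (2 * A)) (divr_gt0 S_gt0 (mulr_gt0 (ltr0Sn _ 1) A_gt0)).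
have -> : (A + B) / (2 * A) * A = (A + B) / 2 by field.
have -> : ((A + B) / (2 * A))^-1 * B = 2 * A * B / (A + B) by field; lra.
set t := _ / (A + B) => ineq_t.
have tS : t * (A + B) = 2 * A * B by rewrite /t mulfVK ?gt_eqF.
by apply/eqP; rewrite eq_le; apply/andP; split; nra.
Qed.

Lemma sum_scale_row_col (F : fieldType) (I : finType) (w : I -> I -> F) k
    (s : F) : s != 0 ->
  \sum_i \sum_j w i j * ((if i == k then s else 1) * (if j == k then s^-1 else 1))
  = w k k + s * (\sum_(j | j != k) w k j) + s^-1 * (\sum_(i | i != k) w i k)
    + \sum_(i | i != k) \sum_(j | j != k) w i j.
Proof.
move=> sN0; rewrite (bigD1 k) //= (bigD1 k) //= eqxx mulfV // mulr1.
have -> : \sum_(j | j != k) w k j * (s * (if j == k then s^-1 else 1))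
    = s * \sum_(j | j != k) w k j.
  by rewrite mulr_sumr; apply: eq_bigr => j /negPf ->; rewrite mulr1 mulrC.
have -> : \sum_(i | i != k) \sum_j w i j * ((if i == k then s else 1) *
                                           (if j == k then s^-1 else 1))
    = \sum_(i | i != k) (s^-1 * w i k + \sum_(j | j != k) w i j).
  apply: eq_bigr => i /negPf ->; rewrite (bigD1 k) //= eqxx mul1r mulrC.
  by congr (_ + _); apply: eq_bigr => j /negPf ->; rewrite mul1r mulr1.
by rewrite big_split /= -mulr_sumr !addrA.
Qed.

Section Potential.
Context {R : realType}.
Variables (n : nat) (K : 'M[R]_n).

Definition potential (x : 'rV[R]_n) : R :=
  \sum_i \sum_j K i j * expR (x ord0 i - x ord0 j).

Lemma potential_continuous : continuous potential.
Proof.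
have sum_continuous (I : Type) (r : seq I) (F : I -> 'rV[R]_n -> R) :
    (forall i, continuous (F i)) -> continuous (fun x => \sum_(i <- r) F i x).
  by move=> F_cont; apply: continuous_big => [|i _]; [exact: add_continuous|].
apply: (sum_continuous) => i; apply: (sum_continuous) => j x.
apply: (@continuousM R _ (cst (K i j)) (fun y : 'rV[R]_n => expR (y ord0 i - y ord0 j)) x).
  exact: cst_continuous.
apply: (@continuous_comp _ _ _ (fun x : 'rV[R]_n => x ord0 i - x ord0 j) expR).
  by apply: continuousB; exact: coord_continuous.
exact: continuous_expR.
Qed.

Lemma potential_shift (x : 'rV[R]_n) (c : R) :
  potential (\row_i (x ord0 i - c)) = potential x.
Proof.
by apply: eq_bigr => i _; apply: eq_bigr => j _; rewrite !mxE; congr (_ * expR _); ring.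
Qed.

Hypothesis K_gt0 : forall i j, 0 < K i j.

(* Beyond this coordinate gap the potential is at least its value at 0. *)
Definition potential_radius : R :=
  (\sum_i \sum_j K i j) * (\sum_i \sum_j (K i j)^-1).

Lemma potential_coercive (y : 'rV[R]_n) a b :
  potential_radius < y ord0 a - y ord0 b -> potential 0 <= potential y.
Proof.
move=> gap.
have potential0 : potential 0 = \sum_i \sum_j K i j.
  by apply: eq_bigr => i _; apply: eq_bigr => j _; rewrite !mxE subrr expR0 mulr1.
have K_ge0 i j : 0 <= K i j by exact: ltW.
have Kab_ge1 : 1 <= K a b * \sum_i \sum_j (K i j)^-1.
  rewrite -(mulfV (lt0r_neq0 (K_gt0 a b))) ler_pM2l //.
  by apply: (entry_le_sum2 (F := fun i j => (K i j)^-1)) => i j; rewrite invr_ge0.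
have radius_le_exp : potential_radius <= expR (y ord0 a - y ord0 b).
  by apply: le_trans (expR_ge1Dx _); lra.
rewrite potential0; apply: le_trans (_ : K a b * potential_radius <= _).
  rewrite /potential_radius mulrCA -[X in X <= _]mulr1 ler_wpM2l //.
  by rewrite sumr_ge0 // => i _; rewrite sumr_ge0.
apply: le_trans (ler_wpM2l (K_ge0 a b) radius_le_exp) _.
by apply: (entry_le_sum2 (F := fun i j => K i j * expR (y ord0 i - y ord0 j))) => i j;
   rewrite mulr_ge0 ?expR_ge0.
Qed.

(* Existence of a global minimizer: minimize on the compact box of radius
   potential_radius and use shift invariance and coercivity outside it. *)
Lemma potential_has_min : (0 < n)%N ->
  exists xs, forall y, potential xs <= potential y.
Proof.
move=> n_gt0; pose i0 := Ordinal n_gt0; set M := potential_radius.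
pose box := [set v : 'rV[R]_n | forall i, `[- M, M]%classic (v ord0 i)]%classic.
have box_compact : compact box.
  by apply: (@rV_compact _ _ (fun=> `[- M, M]%classic)) => _; exact: segment_compact.
have M_ge0 : 0 <= M.
  by rewrite mulr_ge0 // sumr_ge0 // => i _; rewrite sumr_ge0 // => j _;
     rewrite ?invr_ge0 ltW.
have box0 : box 0 by move=> i /=; rewrite mxE in_itv /= oppr_le0 M_ge0.
have [xs _ xs_min] := EVT_min_rV (ex_intro _ 0 box0) box_compact
  (continuous_subspaceT potential_continuous).
have xs_le0 : potential xs <= potential 0 by apply: xs_min; rewrite inE.
exists xs => y; rewrite -(potential_shift y (y ord0 i0)); set y' := \row_i _.
have y'0 : y' ord0 i0 = 0 by rewrite mxE subrr.
have [y'_box|/existsNP[i out]] := pselect (box y').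
  by apply: xs_min; rewrite inE.
apply: le_trans xs_le0 _.
move: out; rewrite /= in_itv /= /M => /negP; rewrite negb_and -!ltNge => /orP[] out.
  by apply: (@potential_coercive _ i0 i); rewrite y'0; lra.
by apply: (@potential_coercive _ i i0); rewrite y'0; lra.
Qed.

(* First-order condition at a global minimizer: multiplying exp(x_k) by s
   adds (s - 1) r_k + (1/s - 1) c_k to the potential, where r_k and c_k are
   the off-diagonal row and column sums; minimality for all s > 0 and
   scaled_sum_min_eq give r_k = c_k. *)
Lemma potential_min_balanced (xs : 'rV[R]_n) :
  (forall y, potential xs <= potential y) ->
  forall k, \sum_j K k j * expR (xs ord0 k - xs ord0 j) =
            \sum_i K i k * expR (xs ord0 i - xs ord0 k).
Proof.
move=> xs_min k.
pose w i j := K i j * expR (xs ord0 i - xs ord0 j).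
have w_ge0 i j : 0 <= w i j by rewrite mulr_ge0 ?expR_ge0 ?ltW.
pose perturb s := \row_i (xs ord0 i + (if i == k then ln s else 0)).
have perturbE s : 0 < s -> potential (perturb s) =
    \sum_i \sum_j w i j * ((if i == k then s else 1) * (if j == k then s^-1 else 1)).
  move=> s_gt0; apply: eq_bigr => i _; apply: eq_bigr => j _.
  rewrite !mxE /w -mulrA; congr (_ * _).
  have -> : xs ord0 i + (if i == k then ln s else 0) -
            (xs ord0 j + (if j == k then ln s else 0)) =
            (xs ord0 i - xs ord0 j) + (if i == k then ln s else 0) +
            - (if j == k then ln s else 0) by ring.
  rewrite !expRD -mulrA; congr (_ * (_ * _)).
    by case: (i == k); rewrite ?expR0 // lnK // posrE.
  by case: (j == k); rewrite ?oppr0 ?expR0 // expRN lnK // posrE.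
have perturb1 : xs = perturb 1.
  by apply/matrixP => i j; rewrite ord1 !mxE ln1 if_same addr0.
have scaled_ineq s : 0 < s ->
    \sum_(j | j != k) w k j + \sum_(i | i != k) w i k <=
    s * (\sum_(j | j != k) w k j) + s^-1 * (\sum_(i | i != k) w i k).
  move=> s_gt0; have := xs_min (perturb s); rewrite {1}perturb1 !perturbE //.
  by rewrite !sum_scale_row_col ?oner_neq0 ?gt_eqF // invr1 !mul1r; lra.
have := scaled_sum_min_eq (sumr_ge0 _ (fun j _ => w_ge0 k j))
  (sumr_ge0 _ (fun i _ => w_ge0 i k)) scaled_ineq.
move=> off_diag_eq; rewrite (bigD1 k) //= [RHS](bigD1 k) //=.
by congr (_ + _); exact: off_diag_eq.
Qed.

Lemma balancing_exists : (0 < n)%N ->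
  exists2 d : 'I_n -> R, (forall i, 0 < d i) & balanced (dscale d K).
Proof.
move=> n_gt0; have [xs xs_min] := potential_has_min n_gt0.
exists (fun i => expR (xs ord0 i)) => [i|]; first exact: expR_gt0.
apply/balancedP => k; under eq_bigr do rewrite mxE; under [RHS]eq_bigr do rewrite mxE.
have entryE i j : expR (xs ord0 i) * K i j / expR (xs ord0 j) =
                  K i j * expR (xs ord0 i - xs ord0 j) by rewrite expRB; ring.
under eq_bigr do rewrite entryE; under [RHS]eq_bigr do rewrite entryE.
exact: potential_min_balanced.
Qed.

End Potential.

Unset Implicit Arguments.

Theorem lemma2 (R : realType) (n : nat) (hn : (0 < n)%N) (C : 'M[R]_n)
  (eta : R) (heta : 0 < eta) :
  exists Pstar : 'M[R]_n,
    (* (i) Pstar is the unique minimizer of the entropic MMC problem *)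
    (in_simplex Pstar /\ balanced Pstar /\
     (forall Q : 'M[R]_n, in_simplex Q -> balanced Q ->
        entropic_obj eta C Pstar <= entropic_obj eta C Q) /\
     (forall Q : 'M[R]_n, in_simplex Q -> balanced Q ->
        (forall Q' : 'M[R]_n, in_simplex Q' -> balanced Q' ->
           entropic_obj eta C Q <= entropic_obj eta C Q') -> Q = Pstar)) /\
    (* (ii) matrix balancing of K = exp[-eta C] exists and recovers Pstar *)
    (exists X : 'M[R]_n, pos_diag X /\
       balanced (X *m gibbs_kernel eta C *m invmx X)) /\
    (forall X : 'M[R]_n, pos_diag X ->
       balanced (X *m gibbs_kernel eta C *m invmx X) ->
       Pstar = (total_sum (X *m gibbs_kernel eta C *m invmx X))^-1 *:
                 (X *m gibbs_kernel eta C *m invmx X)).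
Proof.
have [d d_gt0 d_bal] := balancing_exists (gibbs_kernel_gt0 C eta) hn.
have [[P_simplex P_bal P_min] P_unique] := gibbs_unique_min heta d_gt0 d_bal hn.
exists (normalize (dscale d (gibbs_kernel eta C))); split.
  split=> //; split=> //; split=> // Q Q_simplex Q_bal Q_min.
  by apply: P_unique; split.
split.
  exists (diag_mx (\row_i d i)); split.
    by split=> [|i]; rewrite ?diag_mx_is_diag // !mxE eqxx mulr1n.
  by rewrite diag_conjE // => i; rewrite gt_eqF.
move=> X X_pos; rewrite pos_diag_conjE // => X_bal.
have [X_min _] := gibbs_unique_min heta (proj2 X_pos) X_bal hn.
by rewrite -(P_unique _ X_min).
Qed.
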